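(* Let $n\geq 3$. The group $S_1\times S_{n-1}$ acts freely and transitively on $C_n$.
   Context: $\overline{\Pi}_n$ is the poset of set partitions of $[n]$ ordered by refinement (finer is smaller), with minimum and maximum removed; $\Delta(\overline{\Pi}_n)$ is its order complex (simplices are nonempty chains), with the natural action of $S_n$ induced from its action on $[n]$. $S_1\times S_{n-1}=\{\sigma\in S_n\mid\sigma(1)=1\}$. $A$ is the set of partitions in $\overline{\Pi}_n$ all of whose blocks not containing $1$ are singletons; $C_n$ is the set of $(n-3)$-dimensional simplices (chains of $n-2$ elements) all of whose vertices lie in $A$. *)

From mathcomp Require Import all_boot fingroup perm.
Set Implicit Arguments. Unset Strict Implicit. Unset Printing Implicit Defensive.

(* The ground set [n] = {1,...,n} is modelled by 'I_n = {0,...,n-1};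
   the element "1" of [n] is the ordinal with value 0. *)

Section PartitionLattice.
Variable n : nat.
Notation T := 'I_n.

Definition is_setpart (P : {set {set T}}) : bool := partition P [set: T].

Definition refines (P Q : {set {set T}}) : bool :=
  [forall B in P, exists C in Q, B \subset C].

Definition part_min : {set {set T}} := [set [set i] | i : T].
Definition part_max : {set {set T}} := [set [set: T]].

Definition in_Pibar (P : {set {set T}}) : bool :=
  [&& is_setpart P, P != part_min & P != part_max].

Definition in_A (P : {set {set T}}) : bool :=
  in_Pibar P &&
  [forall B in P, [exists i in B, val i == 0] || (#|B| == 1)].

(* C_n: (n-3)-simplices (chains of n-2 elements) of the order complex
   with all vertices in A *)
Definition in_C (S : {set {set {set T}}}) : bool :=
  [&& #|S| == n - 2,
      [forall P in S, in_A P] &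
      [forall P in S, forall Q in S, refines P Q || refines Q P]].

Definition part_act (s : {perm T}) (P : {set {set T}}) : {set {set T}} :=
  [set [set s i | i in B] | B : {set T} in P].

Definition simp_act (s : {perm T}) (S : {set {set {set T}}})
  : {set {set {set T}}} :=
  [set part_act s P | P : {set {set T}} in S].

(* S_1 x S_{n-1}: permutations fixing 1 *)
Definition fixes1 (s : {perm T}) : Prop :=
  forall i : T, val i = 0 -> s i = i.

End PartitionLattice.

From mathcomp Require Import all_boot fingroup perm.
From mathcomp Require Import zify.
Set Implicit Arguments. Unset Strict Implicit. Unset Printing Implicit Defensive.

(* A partition in A is determined by its block X containing 1, and refinement
   between such partitions is inclusion of these blocks, with 2 <= |X| <= n-1.
   Hence a simplex of C_n is a chain of n-2 such blocks, i.e. a complete flag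
   {1} = X_1 < X_2 < ... < X_n = [n], which is the same as an ordering of [n]
   starting with 1: i is the k-th element when i enters the flag at X_k.
   Permutations fixing 1 act simply transitively on these orderings, since the
   ordering attached to s.F is that of F transported by s. *)

Lemma card_le_inj_iota (T : finType) (A : {set T}) (f : T -> nat) (a b : nat) :
  {in A &, injective f} -> (forall x, x \in A -> a <= f x < b) ->
  #|A| <= b - a.
Proof.
move=> f_inj f_bnd; rewrite cardE -(size_map f) -(size_iota a (b - a)).
apply: uniq_leq_size => [|y /mapP[x]].
  by rewrite map_inj_in_uniq ?enum_uniq // => x y; rewrite !mem_enum; apply: f_inj.
by rewrite mem_enum => /f_bnd hx ->; rewrite mem_iota; lia.
Qed.

Lemma inj_of_card_sublevels (T : finType) (f : T -> nat) :
  (forall k, k <= #|T| -> #|[set x | f x < k]| = k) -> injective f.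
Proof.
move=> levels x y fxy; apply/eqP; apply: contraT => neq_xy.
have f_lt u : f u < #|T|.
  have : [set z | f z < #|T|] = setT.
    by apply/eqP; rewrite eqEcard subsetT cardsT levels ?leqnn.
  by move/setP/(_ u); rewrite !inE.
have : x |: (y |: [set z | f z < f x]) \subset [set z | f z < (f x).+1].
  by apply/subsetP=> z; rewrite !inE => /or3P[/eqP->|/eqP->|/ltnW]; rewrite ?fxy.
move/subset_leq_card; rewrite !cardsU1 !levels ?(ltnW (f_lt x)) ?f_lt //.
by rewrite !inE (negbTE neq_xy) -fxy ltnn addnS ltnn.
Qed.

Section PartitionsA.
Variable n' : nat.
Local Notation n := n'.+1.
Local Notation T := 'I_n.
Implicit Types (P : {set {set T}}) (X Y : {set T}) (s : {perm T}).

Definition partA X : {set {set T}} := X |: [set [set i] | i in ~: X].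

Definition block1 P : {set T} := pblock P ord0.

Lemma partA_in X B :
  (B \in partA X) = (B == X) || [exists i, (i \notin X) && (B == [set i])].
Proof.
rewrite /partA in_setU1; congr (_ || _); apply/imsetP/existsP.
  by case=> i; rewrite inE => hi ->; exists i; rewrite hi eqxx.
by case=> i /andP[hi /eqP ->]; exists i; rewrite ?inE.
Qed.

Lemma partA_partition X : ord0 \in X -> is_setpart (partA X).
Proof.
move=> X0; apply/and3P; split.
- apply/eqP/setP=> i; rewrite inE; apply/bigcupP.
  case Xi: (i \in X); first by exists X; rewrite ?partA_in ?eqxx.
  exists [set i]; last by rewrite inE.
  by rewrite partA_in; apply/orP; right; apply/existsP; exists i; rewrite Xi eqxx.
- apply/trivIsetP=> B C; rewrite !partA_in.
  case/orP=> [/eqP->|/existsP[i /andP[Xi /eqP->]]];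
  case/orP=> [/eqP->|/existsP[j /andP[Xj /eqP->]]].
  + by rewrite eqxx.
  + by move=> _; rewrite disjoint_sym disjoints1.
  + by move=> _; rewrite disjoints1.
  + by move=> ij; rewrite disjoints1 inE; apply: contra ij => /eqP->.
- rewrite partA_in negb_or; apply/andP; split.
    by apply/eqP=> X_0; move: X0; rewrite -X_0 inE.
  by apply/existsP=> [[i /andP[_ /eqP /setP/(_ i)]]]; rewrite !inE eqxx.
Qed.

Lemma block1_partA X : ord0 \in X -> block1 (partA X) = X.
Proof.
move=> X0; have /and3P[_ triv _] := partA_partition X0.
by apply: def_pblock triv _ X0; rewrite partA_in eqxx.
Qed.

Lemma partA_inj X Y : ord0 \in X -> ord0 \in Y -> partA X = partA Y -> X = Y.
Proof. by move=> X0 Y0 /(congr1 block1); rewrite !block1_partA. Qed.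

Lemma partA_set1 : partA [set ord0] = part_min n.
Proof.
apply/setP=> B; rewrite partA_in; apply/idP/imsetP.
  by case/orP=> [/eqP->|/existsP[i /andP[_ /eqP->]]]; eexists.
case=> i _ ->; have [->|i0] := eqVneq i ord0; first by rewrite eqxx.
by apply/orP; right; apply/existsP; exists i; rewrite inE i0 eqxx.
Qed.

Lemma partA_setT : partA [set: T] = part_max n.
Proof.
apply/setP=> B; rewrite partA_in inE; case: (B == _) => //=.
by apply/existsP=> [[i /andP[]]]; rewrite inE.
Qed.

Lemma in_A_partA X : ord0 \in X -> 1 < #|X| < n -> in_A (partA X).
Proof.
move=> X0 /andP[X_gt1 X_ltn]; apply/andP; split.
  rewrite /in_Pibar partA_partition //=; apply/andP; split.
    apply: contraTneq X_gt1; rewrite -partA_set1 => /partA_inj-> //; last exact: set11.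
    by rewrite cards1.
  apply: contraTneq X_ltn; rewrite -partA_setT => /partA_inj-> //; last by rewrite inE.
  by rewrite cardsT card_ord ltnn.
apply/forallP=> B; apply/implyP; rewrite partA_in.
case/orP=> [/eqP->|/existsP[i /andP[_ /eqP->]]]; last by rewrite cards1 orbT.
by apply/orP; left; apply/existsP; exists ord0; rewrite X0.
Qed.

Lemma in_A_singleton P B : in_A P -> B \in P -> ord0 \notin B -> exists i, B = [set i].
Proof.
case/andP=> _ /forall_inP/(_ B) Bsing PB B0; case/orP: (Bsing PB).
  by case/exists_inP=> i Bi /eqP i0; move: B0; rewrite (_ : ord0 = i) ?Bi //; apply: val_inj.
by case/cards1P=> i ->; exists i.
Qed.

Lemma in_A_partA_block1 P : in_A P ->
  [/\ P = partA (block1 P), ord0 \in block1 P & 1 < #|block1 P| < n].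
Proof.
move=> PA; have /andP[/and3P[Ppart Pmin Pmax] _] := PA.
have /and3P[/eqP Pcov Ptriv _] := Ppart.
have Pcover i : i \in cover P by rewrite Pcov inE.
have P1 : block1 P \in P by apply: pblock_mem.
have block1_0 : ord0 \in block1 P by rewrite mem_pblock.
have eP : P = partA (block1 P).
  apply/setP=> B; rewrite partA_in; apply/idP/idP=> [PB|].
    have [B0|B0] := boolP (ord0 \in B); first by rewrite /block1 (def_pblock Ptriv PB B0) eqxx.
    have [i Bi] := in_A_singleton PA PB B0; apply/orP; right.
    apply/existsP; exists i; rewrite Bi eqxx andbT; apply: contra B0 => i1.
    have iB : i \in B by rewrite Bi set11.
    by rewrite -(def_pblock Ptriv PB iB) (def_pblock Ptriv P1 i1).
  case/orP=> [/eqP->//|/existsP[i /andP[i1 /eqP->]]].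
  have Pi : pblock P i \in P by apply: pblock_mem.
  have i0 : ord0 \notin pblock P i.
    by apply: contra i1 => /(def_pblock Ptriv Pi) e; rewrite /block1 e mem_pblock.
  have [j Pij] := in_A_singleton PA Pi i0.
  by move: (mem_pblock P i); rewrite Pcover Pij inE => /eqP ->; rewrite -Pij.
split=> //; apply/andP; split; rewrite ltnNge.
  apply: contra Pmin => card_le1; rewrite {1}eP -partA_set1 (_ : block1 P = [set ord0]) //.
  by apply/eqP; rewrite eq_sym eqEcard sub1set block1_0 cards1.
apply: contra Pmax => card_ge; rewrite {1}eP -partA_setT (_ : block1 P = setT) //.
by apply/eqP; rewrite eqEcard subsetT cardsT card_ord.
Qed.

Lemma refines_partA X Y : ord0 \in X -> ord0 \in Y ->
  refines (partA X) (partA Y) = (X \subset Y).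
Proof.
move=> X0 Y0; apply/forall_inP/idP => [/(_ X)|XY B].
  rewrite partA_in eqxx => /(_ isT)/exists_inP[C]; rewrite partA_in.
  case/orP=> [/eqP->//|/existsP[j /andP[Yj /eqP->]]] /subsetP/(_ _ X0).
  by rewrite inE => /eqP j0; move: Yj; rewrite -j0 Y0.
have YY : Y \in partA Y by rewrite partA_in eqxx.
rewrite partA_in => /orP[/eqP->|/existsP[i /andP[Xi /eqP->]]].
  by apply/exists_inP; exists Y.
have [Yi|Yi] := boolP (i \in Y); apply/exists_inP; first by exists Y; rewrite ?sub1set.
exists [set i] => //; rewrite partA_in; apply/orP; right.
by apply/existsP; exists i; rewrite Yi eqxx.
Qed.

Lemma refines_in_A P Q : in_A P -> in_A Q -> refines P Q = (block1 P \subset block1 Q).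
Proof.
case/in_A_partA_block1=> eP P0 _ /in_A_partA_block1[eQ Q0 _].
by rewrite {1}eP {1}eQ refines_partA.
Qed.

Lemma imsetC_perm s X : s @: (~: X) = ~: (s @: X).
Proof.
apply/setP=> y; rewrite !inE -[y](permKV s).
by rewrite !mem_imset ?inE //; apply: perm_inj.
Qed.

Lemma part_act_partA s X : part_act s (partA X) = partA (s @: X).
Proof.
rewrite /part_act /partA imsetU1 -imsetC_perm -!imset_comp; congr (_ |: _).
by apply: eq_imset => i /=; rewrite imset_set1.
Qed.

End PartitionsA.

Section Flags.
Variable n' : nat.
Local Notation n := n'.+1.
Local Notation T := 'I_n.
Implicit Types (F : {set {set T}}) (X Y : {set T}) (s : {perm T}).

Definition full_flag F : bool :=
  [&& #|F| == n - 2,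
      [forall X in F, (ord0 \in X) && (1 < #|X| < n)] &
      [forall X in F, forall Y in F, (X \subset Y) || (Y \subset X)]].

(* The position (from 0) of [i] in the ordering of [n] attached to the flag:
   the number of members of {1} < F < [n] that do not contain [i]. *)
Definition flag_rank F (i : T) : nat := (i != ord0) + #|[set X in F | i \notin X]|.

Section FullFlag.
Variable F : {set {set T}}.
Hypothesis flagF : full_flag F.

Lemma flag_card : #|F| = n - 2.
Proof. by case/and3P: flagF => /eqP. Qed.

Lemma flag_mem0 X : X \in F -> ord0 \in X.
Proof. by case/and3P: flagF => _ /forall_inP FX _ /FX /andP[]. Qed.

Lemma flag_card_bounds X : X \in F -> 1 < #|X| < n.
Proof. by case/and3P: flagF => _ /forall_inP FX _ /FX /andP[]. Qed.

Lemma flag_subsetE X Y : X \in F -> Y \in F -> (X \subset Y) = (#|X| <= #|Y|).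
Proof.
case/and3P: flagF => _ _ /forall_inP chain FX FY.
apply/idP/idP => [/subset_leq_card //|le_XY].
have /forall_inP/(_ Y FY)/orP[//|YX] := chain X FX.
by have/eqP-> : Y == X by rewrite eqEcard YX.
Qed.

Lemma flag_card_inj : {in F &, injective (fun X => #|X|)}.
Proof.
move=> X Y FX FY /= eq_card; apply/eqP.
by rewrite eqEcard (flag_subsetE FX FY) eq_card leqnn.
Qed.

Lemma card_flag_lt k : k <= n -> #|[set X in F | #|X| < k]| = k - 2.
Proof.
move=> le_kn; set A := [set X : {set T} | #|X| < k]; rewrite setIdE -/A.
have := cardsID A F; rewrite flag_card.
have small : #|F :&: A| <= k - 2.
  apply: card_le_inj_iota => [X Y|X]; rewrite !inE => /andP[FX ?].
    by move=> /andP[FY _]; apply: flag_card_inj.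
  by have := flag_card_bounds FX; lia.
have large : #|F :\: A| <= n - k.
  apply: card_le_inj_iota => [X Y|X]; rewrite !inE => /andP[? FX].
    by move=> /andP[_ FY]; apply: flag_card_inj.
  by have := flag_card_bounds FX; lia.
(* [set] identifies the cardinals up to conversion, so that [lia] sees the same atoms. *)
by move: small large; set a := #|F :&: A|; set b := #|F :\: A|; lia.
Qed.

Lemma flag_exists k : 1 < k < n -> exists2 X, X \in F & #|X| = k.
Proof.
move=> /andP[gt_k1 lt_kn].
have : ~~ ([set X in F | #|X| < k.+1] \subset [set X in F | #|X| < k]).
  by apply: contraTN isT => /subset_leq_card; rewrite !card_flag_lt ?(ltnW lt_kn) //; lia.
case/subsetPn=> X; rewrite !inE ltnS => /andP[FX le_Xk] /nandP[/negP//|].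
by rewrite -leqNgt => ge_Xk; exists X => //; apply/anti_leq; rewrite le_Xk.
Qed.

Lemma flag_rank0 : flag_rank F ord0 = 0.
Proof.
rewrite /flag_rank eqxx add0n; apply/eqP; rewrite cards_eq0; apply/eqP/setP=> X.
by rewrite !inE; apply/negP=> /andP[/flag_mem0->].
Qed.

Lemma flag_rank_lt i : flag_rank F i < n.
Proof.
have [->|i0] := eqVneq i ord0; first by rewrite flag_rank0.
have : 0 < val i < n.
  by rewrite ltn_ord lt0n andbT; apply: contra i0 => /eqP i_0; apply/eqP/val_inj.
rewrite /flag_rank i0 add1n ltnS setIdE => i_bnd.
by apply: leq_ltn_trans (subset_leq_card (subsetIl _ _)) _; rewrite flag_card; lia.
Qed.

Lemma flag_level X : X \in F -> X = [set i | flag_rank F i < #|X|].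
Proof.
move=> FX; have X_bnd := flag_card_bounds FX.
apply/setP=> i; rewrite inE; apply/idP/idP => [Xi|]; last first.
  apply: contraLR => Xi; rewrite -leqNgt /flag_rank.
  have -> : i != ord0 by apply: contraNneq Xi => ->; apply: flag_mem0.
  rewrite -leq_subLR -subSS -card_flag_lt; last by case/andP: X_bnd.
  apply/subset_leq_card/subsetP=> Y; rewrite !inE ltnS => /andP[FY le_YX].
  by rewrite FY; apply: contra Xi; apply/subsetP; rewrite (flag_subsetE FY FX).
have avoid_le : #|[set Y in F | i \notin Y]| <= #|X| - 2.
  rewrite -card_flag_lt; last by case/andP: X_bnd => _ /ltnW.
  apply/subset_leq_card/subsetP=> Y; rewrite !inE => /andP[FY iY]; rewrite FY /=.
  have : ~~ (X \subset Y) by apply/subsetPn; exists i.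
  by rewrite (flag_subsetE FX FY) -ltnNge.
by apply: leq_ltn_trans (leq_add (leq_b1 (i != ord0)) avoid_le) _; lia.
Qed.

Lemma card_flag_rank_lt k : k <= n -> #|[set i | flag_rank F i < k]| = k.
Proof.
rewrite leq_eqVlt => /orP[/eqP->|lt_kn].
  by rewrite -[RHS]card_ord -cardsT; apply: eq_card => i; rewrite !inE flag_rank_lt.
have [gt_k1|] := ltnP 1 k.
  have [X FX <-] : exists2 X, X \in F & #|X| = k by apply: flag_exists; rewrite gt_k1.
  by rewrite -flag_level.
case: k lt_kn => [|[|//]] _ _.
  by apply/eqP; rewrite cards_eq0; apply/eqP/setP=> i; rewrite !inE.
rewrite (_ : [set i | _] = [set ord0]) ?cards1 //; apply/setP=> i; rewrite !inE ltnS leqn0.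
by have [->|i0] := eqVneq i ord0; rewrite ?flag_rank0 // /flag_rank i0.
Qed.

Lemma flag_rank_inj : injective (flag_rank F).
Proof. by apply: inj_of_card_sublevels => k; rewrite card_ord; apply: card_flag_rank_lt. Qed.

End FullFlag.

Lemma flag_rank_act s F i :
  s ord0 = ord0 -> flag_rank (part_act s F) (s i) = flag_rank F i.
Proof.
move=> s0; rewrite /flag_rank -{1}s0 (inj_eq perm_inj); congr (_ + _).
have -> : [set Y in part_act s F | s i \notin Y] = part_act s [set X in F | i \notin X].
  apply/setP=> Y; rewrite inE; apply/andP/imsetP => [[/imsetP[X FX ->]]|[X]].
    by rewrite mem_imset; last exact: perm_inj; exists X; rewrite // inE FX.
  rewrite inE => /andP[FX iX] ->; split; first exact: imset_f.
  by rewrite mem_imset //; apply: perm_inj.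
by rewrite card_imset //; apply/imset_inj/perm_inj.
Qed.

Lemma full_flag_act s F : s ord0 = ord0 -> full_flag F -> full_flag (part_act s F).
Proof.
move=> s0 flagF; apply/and3P; split.
- by rewrite card_imset ?flag_card //; apply/imset_inj/perm_inj.
- apply/forall_inP=> _ /imsetP[X FX ->]; rewrite card_imset; last exact: perm_inj.
  by rewrite -s0 imset_f ?(flag_mem0 flagF) ?(flag_card_bounds flagF).
- apply/forall_inP=> _ /imsetP[X FX ->]; apply/forall_inP=> _ /imsetP[Y FY ->].
  case/and3P: flagF => _ _ /forall_inP/(_ X FX)/forall_inP/(_ Y FY).
  by case/orP=> /imsetS->; rewrite ?orbT.
Qed.

Lemma eq_full_flag F1 F2 : full_flag F1 -> full_flag F2 ->
  flag_rank F1 =1 flag_rank F2 -> F1 = F2.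
Proof.
move=> flagF1 flagF2 eq_rank; apply/eqP.
rewrite eqEcard !flag_card // leqnn andbT; apply/subsetP=> X F1X.
have [Y F2Y eq_card] := flag_exists flagF2 (flag_card_bounds flagF1 F1X).
suff -> : X = Y by [].
rewrite (flag_level flagF1 F1X) (flag_level flagF2 F2Y) eq_card.
by apply/setP=> i; rewrite !inE eq_rank.
Qed.

Lemma perm_of_ranks (f g : T -> nat) :
  injective f -> injective g -> (forall i, f i < n) -> (forall i, g i < n) ->
  exists s : {perm T}, forall i, g (s i) = f i.
Proof.
move=> f_inj g_inj f_lt g_lt.
have f'_inj : injective (fun i => inord (f i) : T).
  by move=> i j /(congr1 val); rewrite /= !inordK // => /f_inj.
have g'_inj : injective (fun i => inord (g i) : T).
  by move=> i j /(congr1 val); rewrite /= !inordK // => /g_inj.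
exists (perm f'_inj * (perm g'_inj)^-1)%g => i; rewrite permM.
have /(congr1 val) := permKV (perm g'_inj) (perm f'_inj i).
by rewrite !permE /= !inordK.
Qed.

Lemma flag_act_free s F : full_flag F -> s ord0 = ord0 -> part_act s F = F -> s = 1%g.
Proof.
move=> flagF s0 sF; apply/permP=> i; rewrite perm1; apply: (flag_rank_inj flagF).
by rewrite -{1}sF flag_rank_act.
Qed.

Lemma flag_act_transitive F1 F2 : full_flag F1 -> full_flag F2 ->
  exists2 s : {perm T}, s ord0 = ord0 & part_act s F1 = F2.
Proof.
move=> flagF1 flagF2.
have [s rank_s] := perm_of_ranks (flag_rank_inj flagF1) (flag_rank_inj flagF2)
  (flag_rank_lt flagF1) (flag_rank_lt flagF2).
have s0 : s ord0 = ord0 by apply: (flag_rank_inj flagF2); rewrite rank_s !flag_rank0.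
exists s => //; apply: eq_full_flag (full_flag_act s0 flagF1) flagF2 _ => j.
by rewrite -{1}(permKV s j) flag_rank_act // -rank_s permKV.
Qed.

End Flags.

Section Simplices.
Variable n' : nat.
Local Notation n := n'.+1.
Local Notation T := 'I_n.
Implicit Types (S : {set {set {set T}}}) (F : {set {set T}}) (s : {perm T}).

Definition flag_of S : {set {set T}} := [set block1 P | P in S].

Definition simplex_of F : {set {set {set T}}} := [set partA X | X in F].

Lemma fixes1P s : fixes1 s <-> s ord0 = ord0.
Proof.
split=> [|s0 i /eqP i0]; first by apply.
by rewrite (_ : i = ord0) //; apply/val_inj/eqP.
Qed.

Lemma in_C_flag_of S : in_C S -> full_flag (flag_of S) /\ S = simplex_of (flag_of S).
Proof.
case/and3P=> /eqP cardS /forall_inP SA /forall_inP chainS.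
have eP P : P \in S -> P = partA (block1 P) by move/SA/in_A_partA_block1 => [].
have eqS : S = simplex_of (flag_of S).
  by rewrite /simplex_of /flag_of -imset_comp -[LHS]imset_id; apply: eq_in_imset.
split=> //; apply/and3P; split.
- rewrite card_in_imset ?cardS // => P Q SP SQ eq_block1.
  by rewrite (eP P SP) (eP Q SQ) eq_block1.
- apply/forall_inP=> _ /imsetP[P SP ->].
  by have [_ -> ->] := in_A_partA_block1 (SA P SP).
- apply/forall_inP=> _ /imsetP[P SP ->]; apply/forall_inP=> _ /imsetP[Q SQ ->].
  by move/forall_inP/(_ Q SQ): (chainS P SP); rewrite !refines_in_A ?SA.
Qed.

Lemma in_C_simplex_of F : full_flag F -> in_C (simplex_of F).
Proof.
move=> flagF; have F0 := flag_mem0 flagF; apply/and3P; split.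
- rewrite card_in_imset ?flag_card // => X Y FX FY; apply: partA_inj; exact: F0.
- apply/forall_inP=> _ /imsetP[X FX ->].
  by apply: in_A_partA; [apply: F0 | apply: flag_card_bounds flagF X FX].
- apply/forall_inP=> _ /imsetP[X FX ->]; apply/forall_inP=> _ /imsetP[Y FY ->].
  rewrite !refines_partA ?F0 //.
  by case/and3P: flagF => _ _ /forall_inP/(_ X FX)/forall_inP/(_ Y FY).
Qed.

Lemma simp_act_simplex_of s F : simp_act s (simplex_of F) = simplex_of (part_act s F).
Proof.
by rewrite /simp_act /simplex_of -!imset_comp; apply: eq_imset => X /=; apply: part_act_partA.
Qed.

Lemma simplex_ofK F : full_flag F -> flag_of (simplex_of F) = F.
Proof.
move=> flagF; rewrite /flag_of -imset_comp -[RHS]imset_id; apply: eq_in_imset => X FX /=.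
exact/block1_partA/(flag_mem0 flagF).
Qed.

Lemma in_C_simp_act s S : s ord0 = ord0 -> in_C S -> in_C (simp_act s S).
Proof.
move=> s0 /in_C_flag_of[flagF ->]; rewrite simp_act_simplex_of.
exact/in_C_simplex_of/full_flag_act.
Qed.

Lemma simp_act_transitive S1 S2 : in_C S1 -> in_C S2 ->
  exists2 s : {perm T}, s ord0 = ord0 & simp_act s S1 = S2.
Proof.
move=> /in_C_flag_of[flagF1 ->] /in_C_flag_of[flagF2 ->].
have [s s0 sF] := flag_act_transitive flagF1 flagF2.
by exists s; rewrite // simp_act_simplex_of sF.
Qed.

Lemma simp_act_free s S : in_C S -> s ord0 = ord0 -> simp_act s S = S -> s = 1%g.
Proof.
move=> /in_C_flag_of[flagF ->] s0; rewrite simp_act_simplex_of.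
move/(congr1 flag_of).
by rewrite !simplex_ofK //; [apply: flag_act_free | apply: full_flag_act].
Qed.

End Simplices.

Theorem lemma16 (n : nat) (hn : 3 <= n) :
  (forall (s : {perm 'I_n}) (S : {set {set {set 'I_n}}}),
      fixes1 s -> in_C S -> in_C (simp_act s S)) /\
  (forall S1 S2 : {set {set {set 'I_n}}}, in_C S1 -> in_C S2 ->
      exists s : {perm 'I_n}, fixes1 s /\ simp_act s S1 = S2) /\
  (forall (s : {perm 'I_n}) (S : {set {set {set 'I_n}}}),
      fixes1 s -> in_C S -> simp_act s S = S -> s = 1%g).
Proof.
case: n hn => // n' _; split; [|split].
- by move=> s S /fixes1P; apply: in_C_simp_act.
- move=> S1 S2 C1 C2; have [s /fixes1P s1 sS] := simp_act_transitive C1 C2.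
  by exists s.
- by move=> s S /fixes1P s0 CS; apply: simp_act_free.
Qed.
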